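(* Let $k$ be a field of characteristic $0$, $m\ge 2$, and let $F_1,\dots,F_m\in k[X_1,\dots,X_m]$ be such that the determinant of the Jacobian matrix $\left(\partial F_i/\partial X_j\right)_{1\le i,j\le m}$ is a nonzero element of $k$. Then the system $$F_i(\mathcal{U}_1(t),\dots,\mathcal{U}_m(t))=tX_i+(1-t)F_i(X_1,\dots,X_m)\quad (1\le i\le m),$$ with initial conditions $\mathcal{U}_i(0)=X_i$ for $1\le i\le m$, has a unique solution $\mathcal{U}_1(t),\dots,\mathcal{U}_m(t)\in k[X_1,\dots,X_m][[t]]$, with $\mathcal{U}_i(t)=X_i+\sum_{j\ge1}u_{i,j}(X_1,\dots,X_m)t^j$ where $u_{i,j}\in k[X_1,\dots,X_m]$.
   Context: $k[X_1,\dots,X_m][[t]]$ denotes the ring of formal power series in $t$ with coefficients in $k[X_1,\dots,X_m]$; evaluation at $t=0$ means taking the constant term. *)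

From HB Require Import structures.
From mathcomp Require Import all_boot all_order all_algebra.
From mathcomp Require Import mpoly.
Set Implicit Arguments. Unset Strict Implicit. Unset Printing Implicit Defensive.
Import GRing.Theory.
Local Open Scope ring_scope.

(* A formal power series in t with coefficients in k[X_1..X_m] is represented
   by its coefficient sequence  nat -> {mpoly k[m]}  (coefficient of t^n). *)
Definition fps (k : fieldType) (m : nat) := nat -> {mpoly k[m]}.

Definition fps_trunc (k : fieldType) (m : nat) (n : nat) (U : fps k m)
  : {poly {mpoly k[m]}} := \poly_(j < n.+1) U j.

(* Coefficient of t^n in F(U_1(t), ..., U_m(t)) for a polynomial F in k[X_1..X_m]
   and power series U_1..U_m : since coefficient n of a polynomial expression
   in power series only depends on their coefficients of index <= n, it is the
   coefficient of t^n of F evaluated at the truncations of the U_j. *)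
Definition fps_comp_coef (k : fieldType) (m : nat) (F : {mpoly k[m]})
  (U : 'I_m -> fps k m) (n : nat) : {mpoly k[m]} :=
  (mmap (fun c : k => (c%:MP)%:P) (fun j => fps_trunc n (U j)) F)`_n.

Definition jacobian (k : fieldType) (m : nat) (F : 'I_m -> {mpoly k[m]})
  : 'M[{mpoly k[m]}]_m := \matrix_(i < m, j < m) (F i)^`M(j).

(* Coefficients of the power series  t X_i + (1 - t) F_i  in t. *)
Definition rhs_coef (k : fieldType) (m : nat) (F : 'I_m -> {mpoly k[m]})
  (i : 'I_m) (n : nat) : {mpoly k[m]} :=
  match n with
  | 0 => F i
  | 1 => 'X_i - F i
  | _ => 0
  end.

Definition is_solution (k : fieldType) (m : nat) (F : 'I_m -> {mpoly k[m]})
  (U : 'I_m -> fps k m) : Prop :=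
  (forall i : 'I_m, U i 0%N = 'X_i) /\
  (forall (i : 'I_m) (n : nat), fps_comp_coef (F i) U n = rhs_coef F i n).

From mathcomp Require Import all_boot all_order all_algebra.
From mathcomp Require Import mpoly ring.
Import GRing.Theory.
Local Open Scope ring_scope.

(** Comparing coefficients of [t^n] (n >= 1) in [F(U(t))] with [U(0) = X], a
    first-order Taylor expansion shows that the unknown coefficient vector
    [u_n] enters linearly, through the Jacobian matrix [J] of [F]:
    [coef_n F(U) = J u_n + (terms in u_0, ..., u_(n-1))].  Since [det J] is a
    nonzero constant, [J] is invertible over [k[X]], so the [u_n] are
    determined recursively, which gives both existence and uniqueness.
    Neither the characteristic nor [m >= 2] plays a role. *)

Lemma mpoly_ring_ind (R : nzRingType) (n : nat) (P : {mpoly R[n]} -> Prop) :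
  (forall c, P c%:MP) -> (forall i, P 'X_i) ->
  (forall p q, P p -> P q -> P (p + q)) ->
  (forall p q, P p -> P q -> P (p * q)) -> forall p, P p.
Proof.
move=> PC PX PD PM; elim/mpolyind => [|c mo p _ _ Pp]; first by rewrite -mpolyC0.
apply: (PD) Pp; rewrite -mul_mpolyC; apply: (PM) => //.
rewrite mpolyXE_id; apply: (big_ind P) => [|//|i _]; first by rewrite -mpolyC1.
by elim: (mo i) => [|e IH]; rewrite ?expr0 -?mpolyC1 // exprS; apply: PM.
Qed.

Lemma mderivXi (R : nzRingType) (n : nat) (i j : 'I_n) :
  ('X_i : {mpoly R[n]})^`M(j) = (i == j)%:R.
Proof.
rewrite mderivX mnm1E; case: eqP => [->|_]; last by rewrite scale0r.
rewrite (_ : U_(j) - U_(j) = 0)%MM ?mpolyX0 ?scale1r //.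
by apply/mnmP => l; rewrite mnmBE subnn mnm0E.
Qed.

Section MmapTaylor.
Context {R : nzRingType} {S : comNzRingType} {n : nat}.
Variables (g : {rmorphism R -> S}) (h d : 'I_n -> S) (e : S).

Lemma mmap_taylor1 (G : {mpoly R[n]}) : exists Q : S,
  mmap g (fun j => h j + e * d j) G =
    mmap g h G + e * \sum_(j < n) mmap g h G^`M(j) * d j + e ^+ 2 * Q.
Proof.
pose D G := \sum_(j < n) mmap g h G^`M(j) * d j.
elim/mpoly_ring_ind: G.
- move=> c; exists 0; rewrite !mmapC big1 ?mulr0 ?addr0 // => j _.
  by rewrite mderivC raddf0 mul0r.
- move=> i; exists 0; rewrite !mmapX !mmap1U mulr0 addr0.
  rewrite (bigD1 i) //= big1 ?addr0 => [|j ji]; last first.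
    by rewrite mderivXi eq_sym (negbTE ji) rmorph0 mul0r.
  by rewrite mderivXi eqxx rmorph1 mul1r.
- move=> p q [Qp Ep] [Qq Eq]; exists (Qp + Qq).
  have DD : D (p + q) = D p + D q.
    by rewrite -big_split; apply: eq_bigr => j _; rewrite mderivD raddfD mulrDl.
  by rewrite !raddfD /= Ep Eq; move: DD; rewrite /D => ->; ring.
- move=> p q [Qp Ep] [Qq Eq].
  have DM : D (p * q) = D p * mmap g h q + mmap g h p * D q.
    rewrite mulr_suml mulr_sumr -big_split; apply: eq_bigr => j _.
    by rewrite mderivM raddfD /= !rmorphM; ring.
  exists (D p * D q + Qp * mmap g h q + mmap g h p * Qq
          + e * (D p * Qq + Qp * D q) + e ^+ 2 * Qp * Qq).
  by rewrite !rmorphM /= Ep Eq; move: DM; rewrite /D => ->; ring.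
Qed.
End MmapTaylor.

Lemma eq_mmap {R S : nzRingType} {n : nat} {f : R -> S} {h1 h2 : 'I_n -> S} :
  h1 =1 h2 -> mmap f h1 =1 mmap f h2.
Proof.
move=> eq_h p; apply: eq_bigr => mo _.
by rewrite (mmap1_eq mo eq_h).
Qed.

Section MmapPolyCoef.
Variables (R : comNzRingType) (n : nat).
Local Notation S := {poly {mpoly R[n]}}.

Variables (g : {rmorphism R -> S}) (h : 'I_n -> S).
Hypothesis g_coef0 : forall c, (g c)`_0 = c%:MP.
Hypothesis h_coef0 : forall j, (h j)`_0 = 'X_j.

Lemma coef0_mmap (G : {mpoly R[n]}) : (mmap g h G)`_0 = G.
Proof.
elim/mpoly_ring_ind: G => [c|i|p q Ep Eq|p q Ep Eq].
- by rewrite mmapC g_coef0.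
- by rewrite mmapX mmap1U h_coef0.
- by rewrite raddfD coefD Ep Eq.
- by rewrite rmorphM coef0M Ep Eq.
Qed.

Lemma coef_mmap_shift (d : 'I_n -> {mpoly R[n]}) (N : nat) (G : {mpoly R[n]}) :
  (0 < N)%N ->
  (mmap g (fun j => h j + 'X^N * (d j)%:P) G)`_N =
    (mmap g h G)`_N + \sum_(j < n) G^`M(j) * d j.
Proof.
move=> N_gt0; have [Q ->] := mmap_taylor1 g h (fun j => (d j)%:P) 'X^N G.
rewrite -exprM !coefD coefXnM ltnn subnn coefXnM.
rewrite ifT ?addr0 ?coef_sum; last by rewrite -{1}[N]muln1 ltn_pmul2l.
congr (_ + _); apply: eq_bigr => j _.
by rewrite coefMC coef0_mmap.
Qed.

End MmapPolyCoef.

Section PowerSeriesComposition.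
Context {k : fieldType} {m : nat}.
Implicit Types (G : {mpoly k[m]}) (U V : 'I_m -> fps k m).

Let polyC_mpolyC : {rmorphism k -> {poly {mpoly k[m]}}} := polyC \o (@mpolyC m k).

Lemma fps_comp_coefE G U n :
  fps_comp_coef G U n = (mmap polyC_mpolyC (fun j => fps_trunc n (U j)) G)`_n.
Proof. by []. Qed.

Lemma coef0_fps_trunc n (u : fps k m) : (fps_trunc n u)`_0 = u 0%N.
Proof. by rewrite coef_poly. Qed.

Lemma fps_trunc_shift {n} {u v : fps k m} :
  (forall l, (l < n)%N -> v l = u l) ->
  fps_trunc n v = fps_trunc n u + 'X^n * (v n - u n)%:P.
Proof.
move=> vu; apply/polyP => l; rewrite coefD coefXnM coefC !coef_poly ltnS.
case: ltngtP => [ln|nl|->]; rewrite ?subnn ?eqxx.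
- by rewrite vu // addr0.
- by rewrite eqn0Ngt subn_gt0 nl add0r.
- by rewrite addrC subrK.
Qed.

Lemma fps_comp_coef0 G U : (forall j, U j 0%N = 'X_j) -> fps_comp_coef G U 0 = G.
Proof.
move=> U0; rewrite fps_comp_coefE coef0_mmap // => [c|j].
  by rewrite /= coefC.
by rewrite coef0_fps_trunc.
Qed.

Lemma fps_comp_coef_shift G U V n :
  (0 < n)%N -> (forall j, U j 0%N = 'X_j) ->
  (forall j l, (l < n)%N -> V j l = U j l) ->
  fps_comp_coef G V n = fps_comp_coef G U n + \sum_(j < m) G^`M(j) * (V j n - U j n).
Proof.
move=> n_gt0 U0 VU; rewrite !fps_comp_coefE.
rewrite (eq_mmap (fun j => fps_trunc_shift (VU j))) coef_mmap_shift // => [c|j].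
  by rewrite /= coefC.
by rewrite coef0_fps_trunc.
Qed.

End PowerSeriesComposition.

Section InverseFunctionSeries.
Context {k : fieldType} {m : nat}.
Variable F : 'I_m -> {mpoly k[m]}.

Lemma jacobian_mulmx (c : 'cV_m) i :
  (jacobian F *m c) i 0 = \sum_(j < m) (F i)^`M(j) * c j 0.
Proof. by rewrite mxE; apply: eq_bigr => j _; rewrite mxE. Qed.

Hypothesis jacobian_unit : jacobian F \in unitmx.

Lemma is_solution_unique U V :
  is_solution F U -> is_solution F V -> forall i n, V i n = U i n.
Proof.
move=> [U0 U_eq] [V0 V_eq] i n; elim/ltn_ind: n i => [[_ i|n IH i]].
  by rewrite U0 V0.
pose delta : 'cV_m := \col_j (V j n.+1 - U j n.+1).
suff : delta = 0 by move/matrixP/(_ i 0); rewrite !mxE => /eqP; rewrite subr_eq0 => /eqP.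
have Jdelta : jacobian F *m delta = 0.
  apply/matrixP => p q; rewrite ord1 jacobian_mulmx mxE.
  under eq_bigr => j _ do rewrite mxE.
  have := fps_comp_coef_shift (F p) _ _ _ (ltn0Sn n) U0 (fun j l lt => IH l lt j).
  by rewrite U_eq V_eq -[LHS]addr0 => /addrI <-.
by rewrite -(mulKmx jacobian_unit delta) Jdelta mulmx0.
Qed.

(* With [U] vanishing at index [n], equation [n] reads [J u_n = rhs_n - coef_n F(U)]
   by [fps_comp_coef_shift]. *)
Definition next_coef (U : 'I_m -> fps k m) (n : nat) : 'cV_m :=
  invmx (jacobian F) *m \col_p (rhs_coef F p n - fps_comp_coef (F p) U n).

Fixpoint approx (n : nat) : 'I_m -> fps k m :=
  if n is n'.+1 then fun i l => if l == n then next_coef (approx n') n i 0 else approx n' i l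
  else fun i l => if l == 0%N then 'X_i else 0.

Lemma approx_eq0 n i l : (n < l)%N -> approx n i l = 0.
Proof.
elim: n l => [|n IH] l /= lt_nl; first by rewrite eqn0Ngt lt_nl.
by rewrite gtn_eqF // IH // ltnW.
Qed.

Lemma approx_stable n n' i l : (l <= n <= n')%N -> approx n' i l = approx n i l.
Proof.
case/andP=> le_ln; elim: n' => [|n' IH]; first by rewrite leqn0 => /eqP ->.
rewrite leq_eqVlt ltnS => /orP[/eqP -> //|le_nn'] /=.
by rewrite ltn_eqF ?IH // (leq_ltn_trans le_ln).
Qed.

Definition solution : 'I_m -> fps k m := fun i l => approx l i l.

Lemma solution_approx n i l : (l <= n)%N -> solution i l = approx n i l.
Proof. by move=> le_ln; rewrite /solution (@approx_stable l n) // leqnn le_ln. Qed.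

Lemma solution_is_solution : is_solution F solution.
Proof.
split=> [//|i [|n]].
  exact: fps_comp_coef0.
have approx0 j : approx n j 0%N = 'X_j by rewrite -(@solution_approx n).
rewrite (fps_comp_coef_shift _ _ _ _ (ltn0Sn n) approx0 (fun j l => @solution_approx n j l)).
under eq_bigr => j _ do rewrite approx_eq0 // subr0 /solution /= eqxx.
rewrite -jacobian_mulmx mulKVmx // mxE.
by rewrite addrC subrK.
Qed.

End InverseFunctionSeries.

Theorem theorem4p1 (k : fieldType) (m : nat) (F : 'I_m -> {mpoly k[m]}) :
  [pchar k] =i pred0 ->
  (2 <= m)%N ->
  (exists c : k, c != 0 /\ \det (jacobian F) = c%:MP) ->
  exists U : 'I_m -> fps k m,
    is_solution F U /\
    forall V : 'I_m -> fps k m, is_solution F V ->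
      forall (i : 'I_m) (n : nat), V i n = U i n.
Proof.
move=> _ _ [c [c_neq0 det_c]].
have jacF_unit : jacobian F \in unitmx by rewrite unitmxE det_c rmorph_unit ?unitfE.
have sol := solution_is_solution F jacF_unit.
exists (solution F); split=> [//|V sol_V].
exact: is_solution_unique F jacF_unit _ _ sol sol_V.
Qed.
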